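(* Let $R$ be a commutative ring, $M$ an $R$-module having at least one prime submodule, and $X=\mathrm{Spec}(M)$. For each $P\in X$, the stalk $\mathcal{A}_{X,P}$ of the sheaf of rings $\mathcal{A}_X$ is isomorphic to $R_{\mathfrak p}$, where $\mathfrak p=(P:M)$. Moreover, $(X,\mathcal{A}_X)$ is a locally ringed space.
   Context: For a submodule $L$ of an $R$-module $M$, $(L:M)=\{r\in R\mid rM\subseteq L\}$. A submodule $P$ of $M$ is prime if $P\neq M$ and whenever $rm\in P$ ($r\in R$, $m\in M$) then $r\in (P:M)$ or $m\in P$; then $(P:M)$ is a prime ideal. $\mathrm{Spec}(M)$ is the set of prime submodules. For $L\le M$, $V(L)=\{P\in X\mid (P:M)\supseteq (L:M)\}$; these are the closed sets of the Zariski topology on $X$. For open $U\subseteq X$, $\mathrm{Supp}(U)=\{(P:M)\mid P\in U\}$. The sheaf of rings $\mathcal{A}_X$: $\mathcal{A}_X(U)$ is the set of families $(\gamma_{\mathfrak p})_{\mathfrak p\in\mathrm{Supp}(U)}\in\prod_{\mathfrak p\in\mathrm{Supp}(U)}R_{\mathfrak p}$ such that for each $Q\in U$ there exist an open neighbourhood $W\subseteq U$ of $Q$ and $s,a\in R$ with $s\notin (P:M)$ and $\gamma_{(P:M)}=a/s$ for all $P\in W$; operations componentwise, restriction maps restrict families, $\mathcal{A}_X(\emptyset)=0$. *)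

From mathcomp Require Import all_boot all_algebra.
Set Implicit Arguments. Unset Strict Implicit. Unset Printing Implicit Defensive.
Import GRing.Theory.
Local Open Scope ring_scope.

(* A ring presented by explicit data: carrier, the predicate cutting out the
   elements of the ring inside the carrier, and its operations. *)
Record ring_data := RingData {
  rcar : Type;
  rdom : rcar -> Prop;
  rzero : rcar;
  rone : rcar;
  radd : rcar -> rcar -> rcar;
  rmul : rcar -> rcar -> rcar;
  ropp : rcar -> rcar }.
Arguments rdom : clear implicits.
Arguments radd : clear implicits.
Arguments rmul : clear implicits.
Arguments ropp : clear implicits.

Definition ring_iso (A B : ring_data) : Prop :=
  exists f : rcar A -> rcar B,
    (forall x, rdom A x -> rdom B (f x)) /\
    (forall x y, rdom A x -> rdom A y -> f x = f y -> x = y) /\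
    (forall y, rdom B y -> exists x, rdom A x /\ f x = y) /\
    f (rzero A) = rzero B /\ f (rone A) = rone B /\
    (forall x y, rdom A x -> rdom A y ->
       f (radd A x y) = radd B (f x) (f y) /\
       f (rmul A x y) = rmul B (f x) (f y)) /\
    (forall x, rdom A x -> f (ropp A x) = ropp B (f x)).

Definition ideal (A : ring_data) (I : rcar A -> Prop) : Prop :=
  (forall x, I x -> rdom A x) /\ I (rzero A) /\
  (forall x y, I x -> I y -> I (radd A x y)) /\
  (forall r x, rdom A r -> I x -> I (rmul A r x)).

Definition maximal_ideal (A : ring_data) (I : rcar A -> Prop) : Prop :=
  ideal I /\ ~ I (rone A) /\
  (forall J, ideal J -> (forall x, I x -> J x) -> ~ J (rone A) ->
     forall x, J x -> I x).

Definition local_ring (A : ring_data) : Prop :=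
  exists m : rcar A -> Prop, maximal_ideal m /\
    forall m' : rcar A -> Prop, maximal_ideal m' -> forall x, m' x <-> m x.

Section Localization.
Variables (R : comPzRingType) (p : R -> Prop).

(* the class a/s : all pairs (b,t), t \notin p, with u(at - bs) = 0, u \notin p *)
Definition frac (a s : R) : R * R -> Prop :=
  fun x => ~ p x.2 /\ exists u, ~ p u /\ u * (a * x.2 - x.1 * s) = 0.

Definition is_frac (c : R * R -> Prop) : Prop :=
  exists a s, ~ p s /\ c = frac a s.

Definition loc_add (c d : R * R -> Prop) : R * R -> Prop :=
  fun x => exists a s b t, ~ p s /\ ~ p t /\ c = frac a s /\ d = frac b t /\
                           frac (a * t + b * s) (s * t) x.

Definition loc_mul (c d : R * R -> Prop) : R * R -> Prop :=
  fun x => exists a s b t, ~ p s /\ ~ p t /\ c = frac a s /\ d = frac b t /\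
                           frac (a * b) (s * t) x.

Definition loc_opp (c : R * R -> Prop) : R * R -> Prop :=
  fun x => exists a s, ~ p s /\ c = frac a s /\ frac (- a) s x.

Definition loc_ring : ring_data :=
  RingData is_frac (frac 0 1) (frac 1 1) loc_add loc_mul loc_opp.
End Localization.

Section Spec.
Variables (R : comPzRingType) (M : lmodType R).

Definition submod (N : M -> Prop) : Prop :=
  N 0 /\ (forall x y, N x -> N y -> N (x + y)) /\
  (forall (r : R) x, N x -> N (r *: x)).

Definition colon (N : M -> Prop) : R -> Prop := fun r => forall m, N (r *: m).

Definition prime_submod (P : M -> Prop) : Prop :=
  submod P /\ (exists m, ~ P m) /\
  (forall (r : R) (m : M), P (r *: m) -> colon P r \/ P m).

Definition spec : Type := {P : M -> Prop | prime_submod P}.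

Definition Vset (L : M -> Prop) : spec -> Prop :=
  fun P => forall r, colon L r -> colon (proj1_sig P) r.

Definition zopen (U : spec -> Prop) : Prop :=
  exists L, submod L /\ forall P, U P <-> ~ Vset L P.

Definition Supp (U : spec -> Prop) : (R -> Prop) -> Prop :=
  fun q => exists P, U P /\ q = colon (proj1_sig P).

(* A family (gamma_q)_q of elements of R_q.  Only the values at q \in Supp(U)
   matter for a section over U: sections over U are compared with [agree_on]. *)
Definition family : Type := (R -> Prop) -> (R * R -> Prop).

Definition agree_on (U : spec -> Prop) (g h : family) : Prop :=
  forall q, Supp U q -> g q = h q.

Definition is_sec (U : spec -> Prop) (g : family) : Prop :=
  forall Q, U Q -> exists W, zopen W /\ W Q /\ (forall P, W P -> U P) /\
    exists a s : R, forall P, W P ->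
      ~ colon (proj1_sig P) s /\
      g (colon (proj1_sig P)) = frac (colon (proj1_sig P)) a s.

Definition fam_const (c : R) : family := fun q => frac q c 1.
Definition fam_add (g h : family) : family := fun q => loc_add q (g q) (h q).
Definition fam_mul (g h : family) : family := fun q => loc_mul q (g q) (h q).
Definition fam_opp (g : family) : family := fun q => loc_opp q (g q).

Section Stalk.
Variable P : spec.

Definition germ : Type := ((spec -> Prop) * family)%type.

Definition good_germ (g : germ) : Prop := zopen g.1 /\ g.1 P /\ is_sec g.1 g.2.

Definition germ_eq (g h : germ) : Prop :=
  exists W, zopen W /\ W P /\ (forall Q, W Q -> g.1 Q /\ h.1 Q) /\
            agree_on W g.2 h.2.

Definition germ_class (g : germ) : germ -> Prop :=
  fun h => good_germ h /\ germ_eq g h.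

Definition is_germ (c : germ -> Prop) : Prop :=
  exists g, good_germ g /\ c = germ_class g.

Definition stalk_add (c d : germ -> Prop) : germ -> Prop :=
  fun h => exists g1 g2, good_germ g1 /\ good_germ g2 /\
    c = germ_class g1 /\ d = germ_class g2 /\
    germ_class ((fun Q => g1.1 Q /\ g2.1 Q), fam_add g1.2 g2.2) h.

Definition stalk_mul (c d : germ -> Prop) : germ -> Prop :=
  fun h => exists g1 g2, good_germ g1 /\ good_germ g2 /\
    c = germ_class g1 /\ d = germ_class g2 /\
    germ_class ((fun Q => g1.1 Q /\ g2.1 Q), fam_mul g1.2 g2.2) h.

Definition stalk_opp (c : germ -> Prop) : germ -> Prop :=
  fun h => exists g, good_germ g /\ c = germ_class g /\
    germ_class (g.1, fam_opp g.2) h.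

Definition stalk : ring_data :=
  RingData is_germ (germ_class ((fun _ => True), fam_const 0))
    (germ_class ((fun _ => True), fam_const 1)) stalk_add stalk_mul stalk_opp.
End Stalk.

Definition topology_axioms : Prop :=
  zopen (fun _ => False) /\ zopen (fun _ => True) /\
  (forall U V, zopen U -> zopen V -> zopen (fun P => U P /\ V P)) /\
  (forall F : (spec -> Prop) -> Prop, (forall U, F U -> zopen U) ->
     zopen (fun P => exists U, F U /\ U P)).

(* A_X is a presheaf of rings: sections form subrings, restriction preserves
   sections (operations are componentwise, so restrictions are ring maps). *)
Definition presheaf_of_rings : Prop :=
  (forall U, zopen U -> is_sec U (fam_const 0) /\ is_sec U (fam_const 1) /\
     forall g h, is_sec U g -> is_sec U h ->
       is_sec U (fam_add g h) /\ is_sec U (fam_mul g h) /\ is_sec U (fam_opp g)) /\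
  (forall U V g, zopen U -> zopen V -> (forall P, V P -> U P) ->
     is_sec U g -> is_sec V g).

Definition sheaf_axioms : Prop :=
  (forall (I : Type) (Ui : I -> spec -> Prop) (U : spec -> Prop) (g h : family),
     zopen U -> (forall i, zopen (Ui i)) -> (forall P, U P <-> exists i, Ui i P) ->
     is_sec U g -> is_sec U h -> (forall i, agree_on (Ui i) g h) -> agree_on U g h) /\
  (forall (I : Type) (Ui : I -> spec -> Prop) (U : spec -> Prop) (gi : I -> family),
     zopen U -> (forall i, zopen (Ui i)) -> (forall P, U P <-> exists i, Ui i P) ->
     (forall i, is_sec (Ui i) (gi i)) ->
     (forall i j, agree_on (fun P => Ui i P /\ Ui j P) (gi i) (gi j)) ->
     exists g, is_sec U g /\ forall i, agree_on (Ui i) g (gi i)).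

Definition locally_ringed_space : Prop :=
  topology_axioms /\ presheaf_of_rings /\ sheaf_axioms /\
  forall P : spec, local_ring (stalk P).

End Spec.

(* Evaluation at p = (P:M) identifies the stalk at P with R_p.  Every
   a/s in R_p is the value of the section Q |-> a/s over the basic open D(s),
   and two sections with equal value a/s = b/t at p, say u(at - bs) = 0 with
   u outside p, already agree on D(s) \cap D(t) \cap D(u), so their germs
   coincide.  R_p is local with maximal ideal pR_p, and locality transports
   along ring isomorphisms.  The sheaf axioms hold because sections are
   families of locally given fractions, so gluing is just taking the union. *)

From Pilot Require Import Defs.
From mathcomp Require Import all_boot all_algebra ring.
From Stdlib Require Import Classical FunctionalExtensionality PropExtensionality.
Set Implicit Arguments. Unset Strict Implicit. Unset Printing Implicit Defensive.
Import GRing.Theory.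
Local Open Scope ring_scope.
Local Notation frac := Defs.frac.
Local Notation family := Defs.family.

Lemma predext (T : Type) (A B : T -> Prop) : (forall x, A x <-> B x) -> A = B.
Proof.
by move=> AB; apply: functional_extensionality => x; apply: propositional_extensionality.
Qed.

Definition prime_ideal (R : comPzRingType) (p : R -> Prop) : Prop :=
  [/\ p 0, forall x y, p x -> p y -> p (x + y), forall x y, p y -> p (x * y),
      ~ p 1 & forall x y, p (x * y) -> p x \/ p y].

Section Localization.
Variables (R : comPzRingType) (p : R -> Prop).
Hypothesis hp : prime_ideal p.

Lemma prime_notin_mul s t : ~ p s -> ~ p t -> ~ p (s * t).
Proof. by case: hp => _ _ _ _ pP hs ht /pP []. Qed.

Lemma frac_self a s : ~ p s -> frac p a s (a, s).
Proof. by move=> hs; split=> //; exists 1; split; [case: hp | rewrite /=; ring]. Qed.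

Lemma frac_sub a s b t : ~ p s ->
  (exists u, ~ p u /\ u * (a * t - b * s) = 0) ->
  forall x, frac p a s x -> frac p b t x.
Proof.
move=> hs [u [hu e]] [c r] [/= hr [v [hv ev]]]; split=> //=.
exists (u * v * s); split; first by do 2!apply: prime_notin_mul => //.
have -> : u * v * s * (b * r - c * t) =
  t * u * (v * (a * r - c * s)) - r * v * (u * (a * t - b * s)) by ring.
by rewrite e ev !mulr0 subr0.
Qed.

Lemma frac_eq {a s b t : R} : ~ p s -> ~ p t ->
  frac p a s = frac p b t <-> exists u, ~ p u /\ u * (a * t - b * s) = 0.
Proof.
move=> hs ht; split=> [E | [u [hu e]]].
  have : frac p b t (b, t) by apply: frac_self.
  by rewrite -E => -[].
apply: predext => x; split; first by apply: frac_sub => //; exists u.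
apply: frac_sub => //; exists u; split=> //.
have -> : u * (b * s - a * t) = - (u * (a * t - b * s)) by ring.
by rewrite e oppr0.
Qed.

Lemma loc_add_frac a s b t : ~ p s -> ~ p t ->
  loc_add p (frac p a s) (frac p b t) = frac p (a * t + b * s) (s * t).
Proof.
move=> hs ht; apply: predext => x; split; last by exists a, s, b, t.
move=> [a' [s' [b' [t' [hs' [ht' [E1 [E2 hx]]]]]]]].
suff -> : frac p (a * t + b * s) (s * t) = frac p (a' * t' + b' * s') (s' * t') by [].
have [u1 [hu1 e1]] := (frac_eq hs hs').1 E1.
have [u2 [hu2 e2]] := (frac_eq ht ht').1 E2.
apply/(frac_eq (prime_notin_mul hs ht) (prime_notin_mul hs' ht')).
exists (u1 * u2); split; first exact: prime_notin_mul.
have -> : u1 * u2 * ((a * t + b * s) * (s' * t') - (a' * t' + b' * s') * (s * t)) =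
  t * t' * u2 * (u1 * (a * s' - a' * s)) + s * s' * u1 * (u2 * (b * t' - b' * t)) by ring.
by rewrite e1 e2 !mulr0 addr0.
Qed.

Lemma loc_mul_frac a s b t : ~ p s -> ~ p t ->
  loc_mul p (frac p a s) (frac p b t) = frac p (a * b) (s * t).
Proof.
move=> hs ht; apply: predext => x; split; last by exists a, s, b, t.
move=> [a' [s' [b' [t' [hs' [ht' [E1 [E2 hx]]]]]]]].
suff -> : frac p (a * b) (s * t) = frac p (a' * b') (s' * t') by [].
have [u1 [hu1 e1]] := (frac_eq hs hs').1 E1.
have [u2 [hu2 e2]] := (frac_eq ht ht').1 E2.
apply/(frac_eq (prime_notin_mul hs ht) (prime_notin_mul hs' ht')).
exists (u1 * u2); split; first exact: prime_notin_mul.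
have -> : u1 * u2 * (a * b * (s' * t') - a' * b' * (s * t)) =
  b * t' * u2 * (u1 * (a * s' - a' * s)) + a' * s * u1 * (u2 * (b * t' - b' * t)) by ring.
by rewrite e1 e2 !mulr0 addr0.
Qed.

Lemma loc_opp_frac a s : ~ p s -> loc_opp p (frac p a s) = frac p (- a) s.
Proof.
move=> hs; apply: predext => x; split; last by exists a, s.
move=> [a' [s' [hs' [E hx]]]].
suff -> : frac p (- a) s = frac p (- a') s' by [].
have [u [hu e]] := (frac_eq hs hs').1 E.
apply/(frac_eq hs hs'); exists u; split=> //.
have -> : u * (- a * s' - - a' * s) = - (u * (a * s' - a' * s)) by ring.
by rewrite e oppr0.
Qed.

Definition loc_maxideal : (R * R -> Prop) -> Prop :=
  fun c => exists a s, ~ p s /\ c = frac p a s /\ p a.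

Lemma loc_maxideal_frac a s : ~ p s -> loc_maxideal (frac p a s) -> p a.
Proof.
case: hp => _ pD pM _ pP hs [a' [s' [hs' [E pa']]]].
have [u [hu e]] := (frac_eq hs hs').1 E.
have : p (u * (a * s' - a' * s)) by rewrite e; case: hp.
case/pP=> // pd.
have : p (a * s').
  by rewrite -(subrK (a' * s) (a * s')); apply: pD => //; rewrite mulrC; apply: pM.
by case/pP.
Qed.

Lemma loc_maxideal_ideal : ideal (A := loc_ring p) loc_maxideal.
Proof.
case: hp => _ pD pM _ _.
split; first by move=> x [a [s [hs [-> _]]]]; exists a, s.
split; first by exists 0, 1; case: hp.
split.
  move=> x y [a [s [hs [-> pa]]]] [b [t [ht [-> pb]]]] /=.
  rewrite loc_add_frac //; exists (a * t + b * s), (s * t).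
  split; first exact: prime_notin_mul.
  by split=> //; apply: pD; rewrite mulrC; apply: pM.
move=> r x [c [v [hv ->]]] [a [s [hs [-> pa]]]] /=.
rewrite loc_mul_frac //; exists (c * a), (v * s).
by split; [exact: prime_notin_mul | split=> //; apply: pM].
Qed.

(* A fraction a/s with a outside p is a unit, with inverse s/a. *)
Lemma loc_proper_ideal_sub_maxideal J : ideal (A := loc_ring p) J -> ~ J (frac p 1 1) ->
  forall x, J x -> loc_maxideal x.
Proof.
move=> [Jdom [_ [_ JM]]] J1 x Jx.
have [a [s [hs Ex]]] := Jdom x Jx.
exists a, s; do 2!split=> //; apply: NNPP => ha; apply: J1.
have <- : loc_mul p (frac p s a) (frac p a s) = frac p 1 1.
  rewrite loc_mul_frac //; apply/(frac_eq (prime_notin_mul ha hs)); first by case: hp.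
  by exists 1; split; [case: hp | ring].
by apply: JM; [exists s, a | rewrite -Ex].
Qed.

Lemma loc_local : local_ring (loc_ring p).
Proof.
have p1 : ~ p 1 by case: hp.
have max1 : ~ loc_maxideal (frac p 1 1) by move/(loc_maxideal_frac p1).
exists loc_maxideal; split.
  split; first exact: loc_maxideal_ideal.
  by split=> // J HJ _ J1; apply: loc_proper_ideal_sub_maxideal.
move=> m [Hm [m1 mmax]] x; split; first exact: loc_proper_ideal_sub_maxideal.
by apply: mmax => //; [exact: loc_maxideal_ideal | exact: loc_proper_ideal_sub_maxideal].
Qed.

End Localization.

Section IsoLocal.
Variables (A B : ring_data) (f : rcar A -> rcar B).
Hypotheses (dom0 : rdom A (rzero A)) (dom1 : rdom A (rone A))
  (domD : forall x y, rdom A x -> rdom A y -> rdom A (radd A x y))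
  (domM : forall x y, rdom A x -> rdom A y -> rdom A (rmul A x y)).
Hypotheses (f_dom : forall x, rdom A x -> rdom B (f x))
  (f_inj : forall x y, rdom A x -> rdom A y -> f x = f y -> x = y)
  (f_surj : forall y, rdom B y -> exists x, rdom A x /\ f x = y)
  (f0 : f (rzero A) = rzero B) (f1 : f (rone A) = rone B)
  (fD : forall x y, rdom A x -> rdom A y -> f (radd A x y) = radd B (f x) (f y))
  (fM : forall x y, rdom A x -> rdom A y -> f (rmul A x y) = rmul B (f x) (f y)).

Definition iso_preim (J : rcar B -> Prop) : rcar A -> Prop := fun x => rdom A x /\ J (f x).
Definition iso_image (I : rcar A -> Prop) : rcar B -> Prop := fun y => exists x, I x /\ f x = y.

Lemma ideal_iso_preim J : ideal J -> ideal (iso_preim J).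
Proof.
move=> [_ [J0 [JD JM]]]; split; first by move=> x [].
split; first by split; rewrite ?f0.
split; first by move=> x y [dx Jx] [dy Jy]; split; [exact: domD | rewrite fD //; exact: JD].
by move=> r x dr [dx Jx]; split; [exact: domM | rewrite fM //; apply: JM => //; exact: f_dom].
Qed.

Lemma ideal_iso_image I : ideal I -> ideal (iso_image I).
Proof.
move=> [Idom [I0 [ID IM]]]; split; first by move=> y [x [Ix <-]]; exact/f_dom/Idom.
split; first by exists (rzero A).
split.
  move=> _ _ [x [Ix <-]] [x' [Ix' <-]]; exists (radd A x x').
  by split; [exact: ID | rewrite fD //; exact: Idom].
move=> r _ dr [x [Ix <-]]; have [r' [dr' <-]] := f_surj dr.
by exists (rmul A r' x); split; [exact: IM | rewrite fM //; exact: Idom].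
Qed.

Lemma iso_image_one I : ideal I -> iso_image I (rone B) -> I (rone A).
Proof.
by move=> [Idom _] [x [Ix]]; rewrite -f1 => /f_inj <- //; exact: Idom.
Qed.

Lemma maximal_iso_preim m : maximal_ideal m -> maximal_ideal (iso_preim m).
Proof.
move=> [Hm [m1 mmax]]; split; first exact: ideal_iso_preim.
split; first by rewrite /iso_preim f1 => -[].
move=> J HJ mJ J1 x Jx.
have dx : rdom A x by case: HJ => Jdom _; exact: Jdom.
split=> //; apply: (mmax _ (ideal_iso_image HJ)); last by exists x.
  move=> y my; have [x' [dx' fx']] := f_surj (proj1 Hm y my); subst y.
  by exists x'; split=> //; apply: mJ; split.
by move/(iso_image_one HJ)/J1.
Qed.

Lemma maximal_iso_image m : maximal_ideal m -> maximal_ideal (iso_image m).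
Proof.
move=> [Hm [m1 mmax]]; split; first exact: ideal_iso_image.
split; first by move/(iso_image_one Hm)/m1.
move=> J HJ mJ J1 y Jy.
have [x [dx fx]] := f_surj (proj1 HJ y Jy); subst y.
exists x; split=> //; apply: (mmax _ (ideal_iso_preim HJ)) => //.
- by move=> z mz; split; [exact: (proj1 Hm) | apply: mJ; exists z].
- by rewrite /iso_preim f1 => -[].
Qed.

Lemma local_ring_transport : local_ring B -> local_ring A.
Proof.
move=> [mB [HmB mB_uniq]]; exists (iso_preim mB); split; first exact: maximal_iso_preim.
move=> m Hm x; have mdom : forall x, m x -> rdom A x by case: Hm => -[].
have E := mB_uniq _ (maximal_iso_image Hm).
split=> [mx | [dx /E [x' [mx' fx']]]].
  by split; [exact: mdom | apply/E; exists x].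
by rewrite -(f_inj (mdom _ mx') dx fx').
Qed.

End IsoLocal.

Lemma ring_iso_local (A B : ring_data) :
  rdom A (rzero A) -> rdom A (rone A) ->
  (forall x y, rdom A x -> rdom A y -> rdom A (radd A x y)) ->
  (forall x y, rdom A x -> rdom A y -> rdom A (rmul A x y)) ->
  ring_iso A B -> local_ring B -> local_ring A.
Proof.
move=> dom0 dom1 domD domM [f [fdom [finj [fsurj [f0 [f1 [fDM _]]]]]]].
apply: (local_ring_transport (f := f)) => // x y dx dy; by case: (fDM x y dx dy).
Qed.

Section Zariski.
Variables (R : comPzRingType) (M : lmodType R).
Implicit Types (P Q : spec M) (U V W : spec M -> Prop).
Local Notation col P := (colon (proj1_sig P)).

Lemma colon_spec_prime P : prime_ideal (col P).
Proof.
case: P => P [[P0 [PD PZ]] [[m Pm] Pprime]] /=; split.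
- by move=> x; rewrite scale0r.
- by move=> x y hx hy m'; rewrite scalerDl; apply: PD.
- by move=> x y hy m'; rewrite -scalerA; apply: PZ.
- by move=> h; apply: Pm; have := h m; rewrite scale1r.
move=> x y hxy; have [hx | nx] := classic (colon P x); [by left | right] => m'.
by case: (Pprime x (y *: m')) => //; rewrite scalerA.
Qed.

Lemma zopen_colon_eq U P Q : zopen U -> col P = col Q -> U P -> U Q.
Proof. by move=> [L [_ HL]] E /HL hP; apply/HL; rewrite /Vset -E. Qed.

(* The basic open set D(u) is the complement of V(uM). *)
Lemma zopen_basic (u : R) : zopen (fun Q => ~ col Q u).
Proof.
exists (fun m => exists m', m = u *: m'); split.
  split; first by exists 0; rewrite scaler0.
  split; first by move=> _ _ [x ->] [y ->]; exists (x + y); rewrite scalerDr.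
  by move=> r _ [x ->]; exists (r *: x); rewrite !scalerA mulrC.
move=> Q; split=> nQ hQ; apply: nQ; first by apply: hQ => m; exists m.
move=> r hr m; have [m' ->] := hr m; exact: hQ.
Qed.

Lemma zopen_setT : zopen (fun _ : spec M => True).
Proof.
exists (fun _ => True); split=> // Q; split=> // _ h.
by case: (colon_spec_prime Q) => _ _ _ + _; apply; apply: h.
Qed.

Lemma zopen_set0 : zopen (fun _ : spec M => False).
Proof.
exists (fun m => m = 0); split.
  by split=> //; split=> [x y -> -> | r x ->]; rewrite ?addr0 ?scaler0.
move=> Q; split=> // h; apply: h => r hr m; rewrite (hr m).
by case: (proj1 (proj2_sig Q)).
Qed.

(* V(L1) \cup V(L2) = V(L1 \cap L2), since (Q:M) is prime. *)
Lemma zopen_setI U V : zopen U -> zopen V -> zopen (fun P => U P /\ V P).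
Proof.
move=> [L1 [[L10 [L1D L1Z]] H1]] [L2 [[L20 [L2D L2Z]] H2]].
exists (fun m => L1 m /\ L2 m); split.
  split=> //; split=> [x y [? ?] [? ?] | r x [? ?]]; split; auto.
move=> Q; rewrite H1 H2; split.
  move=> [n1 n2] hV; apply: n1 => r1 h1; apply: NNPP => nr1.
  apply: n2 => r2 h2; apply: NNPP => nr2.
  have [_ _ _ _ Qprime] := colon_spec_prime Q.
  have /Qprime [] // : col Q (r1 * r2).
  apply: hV => m; split; first by rewrite -scalerA; apply: h1.
  by rewrite mulrC -scalerA; apply: h2.
by move=> nV; split=> hV; apply: nV => r hr; apply: hV => m; case: (hr m).
Qed.

(* A union of opens is the complement of V(N), N the submodule generated by
   the modules rM with r in (L:M) for one of the L defining the members. *)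
Lemma zopen_bigcup (F : (spec M -> Prop) -> Prop) : (forall U, F U -> zopen U) ->
  zopen (fun P => exists U, F U /\ U P).
Proof.
move=> HF.
pose S (x : M) := exists U L r (m : M), [/\ F U, submod L, forall P, U P <-> ~ Vset L P,
  colon L r & x = r *: m].
exists (fun x => forall N, submod N -> (forall y, S y -> N y) -> N x); split.
  split; first by move=> N [N0 _].
  split=> [x y hx hy | r x hx] N SN hS; have [_ [ND NZ]] := SN.
    by apply: ND; [exact: hx | exact: hy].
  by apply: NZ; exact: hx.
move=> Q; split.
  move=> [U [FU UQ]] hV; have [L [SL HL]] := HF U FU.
  apply: (proj1 (HL Q) UQ) => r hr; apply: hV => m N SN hS.
  by apply: hS; exists U, L, r, m.
move=> nV; apply: NNPP => nU; apply: nV => r hr m.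
apply: (hr m) (proj1 (proj2_sig Q)) _ => _ [U [L [r' [m' [FU _ HL hr' ->]]]]].
have : ~ U Q by move=> UQ; apply: nU; exists U.
by rewrite HL => /NNPP; apply.
Qed.

Lemma zariski_topology : topology_axioms M.
Proof.
split; first exact: zopen_set0.
split; first exact: zopen_setT.
by split; [exact: zopen_setI | exact: zopen_bigcup].
Qed.

End Zariski.

Section StructureSheaf.
Variables (R : comPzRingType) (M : lmodType R).
Implicit Types (P Q : spec M) (U V W : spec M -> Prop) (g h : family R).
Local Notation col P := (colon (proj1_sig P)).

Lemma is_sec_const U c : zopen U -> is_sec U (fam_const c).
Proof.
move=> oU Q UQ; exists U; do 3!split=> //.
by exists c, 1 => P _; split=> //; case: (colon_spec_prime P).
Qed.

Lemma is_sec_sub U V g : (forall P, V P -> U P) -> zopen V -> is_sec U g -> is_sec V g.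
Proof.
move=> VU oV Hg Q VQ; have [W [oW [WQ [WU [a [s Ha]]]]]] := Hg Q (VU Q VQ).
exists (fun P => W P /\ V P); split; first exact: zopen_setI.
by do 2!split=> //; [move=> P [] | exists a, s => P [/Ha]].
Qed.

Lemma is_sec2_common_fracs U g h Q : is_sec U g -> is_sec U h -> U Q ->
  exists W, [/\ zopen W, W Q, forall P, W P -> U P & exists a s b t, forall P, W P ->
    [/\ ~ col P s, ~ col P t, g (col P) = frac (col P) a s & h (col P) = frac (col P) b t]].
Proof.
move=> Hg Hh UQ.
have [W1 [o1 [W1Q [W1U [a [s Ha]]]]]] := Hg Q UQ.
have [W2 [o2 [W2Q [_ [b [t Hb]]]]]] := Hh Q UQ.
exists (fun P => W1 P /\ W2 P); split=> //; first exact: zopen_setI.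
  by move=> P [/W1U].
by exists a, s, b, t => P [/Ha [hs ->] /Hb [ht ->]].
Qed.

Lemma is_sec_add U g h : is_sec U g -> is_sec U h -> is_sec U (fam_add g h).
Proof.
move=> Hg Hh Q UQ; have [W [oW WQ WU [a [s [b [t H]]]]]] := is_sec2_common_fracs Hg Hh UQ.
exists W; do 3!split=> //; exists (a * t + b * s), (s * t) => P /H [hs ht eg eh].
have Pprime := colon_spec_prime P.
by rewrite /fam_add eg eh loc_add_frac //; split=> //; apply: prime_notin_mul.
Qed.

Lemma is_sec_mul U g h : is_sec U g -> is_sec U h -> is_sec U (fam_mul g h).
Proof.
move=> Hg Hh Q UQ; have [W [oW WQ WU [a [s [b [t H]]]]]] := is_sec2_common_fracs Hg Hh UQ.
exists W; do 3!split=> //; exists (a * b), (s * t) => P /H [hs ht eg eh].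
have Pprime := colon_spec_prime P.
by rewrite /fam_mul eg eh loc_mul_frac //; split=> //; apply: prime_notin_mul.
Qed.

Lemma is_sec_opp U g : is_sec U g -> is_sec U (fam_opp g).
Proof.
move=> Hg Q UQ; have [W [oW [WQ [WU [a [s Ha]]]]]] := Hg Q UQ.
exists W; do 3!split=> //; exists (- a), s => P /Ha [hs eg].
by rewrite /fam_opp eg loc_opp_frac //; exact: colon_spec_prime.
Qed.

Lemma structure_presheaf : presheaf_of_rings M.
Proof.
split=> [U oU | U V g _ oV VU]; last exact: is_sec_sub.
split; first exact: is_sec_const.
split; first exact: is_sec_const.
move=> g h Hg Hh; split; first exact: is_sec_add.
by split; [exact: is_sec_mul | exact: is_sec_opp].
Qed.

(* Gluing is a plain union.  It is well defined because opens are saturated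
   for P |-> (P:M): a q in Supp(U_i) and in Supp(U_j) is (P:M) for a single P
   in both U_i and U_j. *)
Lemma structure_sheaf : sheaf_axioms M.
Proof.
split.
  move=> I Ui U g h _ _ HU _ _ Hag _ [P [UP ->]].
  by have [i UiP] := proj1 (HU P) UP; apply: (Hag i); exists P.
move=> I Ui U gi oU oUi HU Hs Hag.
pose g : family R := fun q x => exists i, Supp (Ui i) q /\ gi i q x.
have g_gi i q : Supp (Ui i) q -> g q = gi i q.
  move=> [P [UiP Eq]]; apply: predext => x; split; last by exists i; split=> //; exists P.
  move=> [j [[P' [UjP' Eq']] hx]].
  have UjP : Ui j P by apply: zopen_colon_eq (oUi j) _ UjP'; rewrite -Eq -Eq'.
  by rewrite (Hag i j q) //; exists P.
exists g; split=> [Q UQ | i]; last exact: g_gi.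
have [i UiQ] := proj1 (HU Q) UQ.
have [W [oW [WQ [WUi [a [s Ha]]]]]] := Hs i Q UiQ.
exists W; do 2!split=> //; split; first by move=> P WP; apply/HU; exists i; apply: WUi.
exists a, s => P WP; have [hs eg] := Ha P WP; split=> //.
by rewrite (g_gi i) //; exists P; split=> //; apply: WUi.
Qed.

End StructureSheaf.

Section Stalk.
Variables (R : comPzRingType) (M : lmodType R) (P : spec M).
Local Notation col P := (colon (proj1_sig P)).
Local Notation q := (col P).
Local Notation germ := (Defs.germ M).
Implicit Types (g h : germ).

Lemma germ_eq_refl g : good_germ P g -> germ_eq P g g.
Proof. by move=> [oU [UP _]]; exists g.1. Qed.

Lemma germ_eq_sym g h : germ_eq P g h -> germ_eq P h g.
Proof.
move=> [W [oW [WP [WU ag]]]]; exists W; do 2!split=> //.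
by split=> [Q /WU [] | q' /ag ->].
Qed.

Lemma germ_eq_trans g h k : germ_eq P g h -> germ_eq P h k -> germ_eq P g k.
Proof.
move=> [W [oW [WP [WU ag]]]] [W' [oW' [W'P [W'U ag']]]].
exists (fun Q => W Q /\ W' Q); split; first exact: zopen_setI.
split=> //; split=> [Q [/WU [? _] /W'U [_ ?]] // | _ [Q [[WQ W'Q] ->]]].
by rewrite ag ?ag' //; exists Q.
Qed.

Lemma germ_class_eq g h : germ_eq P g h -> germ_class P g = germ_class P h.
Proof.
move=> E; apply: predext => k; split=> -[Gk Ek]; split=> //.
  exact: germ_eq_trans (germ_eq_sym E) Ek.
exact: germ_eq_trans E Ek.
Qed.

Lemma germ_eq_of_class g h : good_germ P h -> germ_class P g = germ_class P h ->
  germ_eq P g h.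
Proof.
move=> Gh E; have : germ_class P h h by split=> //; exact: germ_eq_refl.
by rewrite -E => -[].
Qed.

Lemma germ_eq_val g h : germ_eq P g h -> g.2 q = h.2 q.
Proof. by move=> [W [_ [WP [_ ag]]]]; apply: ag; exists P. Qed.

Lemma good_germ_val g : good_germ P g -> exists a s, ~ q s /\ g.2 q = frac q a s.
Proof.
move=> [_ [UP sec]]; have [W [_ [WP [_ [a [s H]]]]]] := sec P UP.
by exists a, s; apply: H.
Qed.

Lemma good_germ_const c : good_germ P ((fun _ => True), fam_const c).
Proof. by split; [exact: zopen_setT | split=> //; apply/is_sec_const/zopen_setT]. Qed.

Lemma good_germ_op2 (op : family R -> family R -> family R) g1 g2 :
  (forall (U : spec M -> Prop) f1 f2, is_sec U f1 -> is_sec U f2 -> is_sec U (op f1 f2)) ->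
  good_germ P g1 -> good_germ P g2 ->
  good_germ P ((fun Q => g1.1 Q /\ g2.1 Q), op g1.2 g2.2).
Proof.
move=> Hop [o1 [U1P s1]] [o2 [U2P s2]].
have oI := zopen_setI o1 o2.
do 2!split=> //=; apply: Hop.
  by apply: is_sec_sub oI s1 => Q [].
by apply: is_sec_sub oI s2 => Q [].
Qed.

Lemma good_germ_opp g : good_germ P g -> good_germ P (g.1, fam_opp g.2).
Proof. by move=> [oU [UP sec]]; do 2!split=> //; exact: is_sec_opp. Qed.

Lemma germ_eq_op2 (F : (R -> Prop) -> (R * R -> Prop) -> (R * R -> Prop) -> R * R -> Prop)
    g1 g2 g1' g2' : germ_eq P g1 g1' -> germ_eq P g2 g2' ->
  germ_eq P ((fun Q => g1.1 Q /\ g2.1 Q), fun q' => F q' (g1.2 q') (g2.2 q'))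
            ((fun Q => g1'.1 Q /\ g2'.1 Q), fun q' => F q' (g1'.2 q') (g2'.2 q')).
Proof.
move=> [W [oW [WP [WU ag]]]] [W' [oW' [W'P [W'U ag']]]].
exists (fun Q => W Q /\ W' Q); split; first exact: zopen_setI.
split=> //; split=> [Q [/WU [? ?] /W'U [? ?]] // | _ [Q [[WQ W'Q] ->]] /=].
by rewrite ag ?ag' //; exists Q.
Qed.

Lemma stalk_add_class g1 g2 : good_germ P g1 -> good_germ P g2 ->
  stalk_add P (germ_class P g1) (germ_class P g2) =
  germ_class P ((fun Q => g1.1 Q /\ g2.1 Q), fam_add g1.2 g2.2).
Proof.
move=> G1 G2; apply: predext => k; split; last by exists g1, g2.
move=> [g1' [g2' [G1' [G2' [/(germ_eq_of_class G1') E1 [/(germ_eq_of_class G2') E2]]]]]].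
by rewrite (germ_class_eq (germ_eq_op2 (@loc_add R) E1 E2)).
Qed.

Lemma stalk_mul_class g1 g2 : good_germ P g1 -> good_germ P g2 ->
  stalk_mul P (germ_class P g1) (germ_class P g2) =
  germ_class P ((fun Q => g1.1 Q /\ g2.1 Q), fam_mul g1.2 g2.2).
Proof.
move=> G1 G2; apply: predext => k; split; last by exists g1, g2.
move=> [g1' [g2' [G1' [G2' [/(germ_eq_of_class G1') E1 [/(germ_eq_of_class G2') E2]]]]]].
by rewrite (germ_class_eq (germ_eq_op2 (@loc_mul R) E1 E2)).
Qed.

Lemma stalk_opp_class g : good_germ P g ->
  stalk_opp P (germ_class P g) = germ_class P (g.1, fam_opp g.2).
Proof.
move=> G; apply: predext => k; split; last by exists g.
move=> [g' [G' [/(germ_eq_of_class G') [W [oW [WP [WU ag]]]] hk]]].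
suff -> : germ_class P (g.1, fam_opp g.2) = germ_class P (g'.1, fam_opp g'.2) by [].
by apply: germ_class_eq; exists W; do 3!split=> //; move=> q' /ag /= E; rewrite /fam_opp E.
Qed.

(* A germ is determined by its value at q: if a/s = b/t in R_q, witnessed by
   u(at - bs) = 0, the two sections agree wherever s, t and u stay invertible. *)
Lemma germ_eq_of_val g h : good_germ P g -> good_germ P h -> g.2 q = h.2 q ->
  germ_eq P g h.
Proof.
move=> [oU [UP sg]] [oV [VP sh]] Egh.
have [W1 [oW1 [W1P [W1U [a [s Ha]]]]]] := sg P UP.
have [W2 [oW2 [W2P [W2V [b [t Hb]]]]]] := sh P VP.
have [hs ea] := Ha P W1P; have [ht eb] := Hb P W2P.
have [u [hu e]] := (frac_eq (colon_spec_prime P) hs ht).1 (etrans (esym ea) (etrans Egh eb)).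
exists (fun Q => (W1 Q /\ W2 Q) /\ ~ col Q u); split.
  by apply: zopen_setI; [exact: zopen_setI | exact: zopen_basic].
split=> //; split=> [Q [[/W1U ? /W2V ?] _] // | _ [Q [[[W1Q W2Q] hQ] ->]]].
have [hs' ->] := Ha Q W1Q; have [ht' ->] := Hb Q W2Q.
by apply/(frac_eq (colon_spec_prime Q) hs' ht'); exists u.
Qed.

Definition frac_germ (a s : R) : germ := ((fun Q => ~ col Q s), fun q' => frac q' a s).

Lemma good_frac_germ a s : ~ q s -> good_germ P (frac_germ a s).
Proof.
move=> hs; split; first exact: zopen_basic.
split=> // Q hQ; exists (fun Q => ~ col Q s); split; first exact: zopen_basic.
by do 2!split=> //; exists a, s.
Qed.

Definition stalk_eval (c : germ -> Prop) : R * R -> Prop :=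
  fun x => exists g, good_germ P g /\ c = germ_class P g /\ g.2 q x.

Lemma stalk_eval_class g : good_germ P g -> stalk_eval (germ_class P g) = g.2 q.
Proof.
move=> G; apply: predext => x; split; last by exists g.
by move=> [g' [G' [/(germ_eq_of_class G') /germ_eq_val -> ]]].
Qed.

Lemma stalk_iso : ring_iso (stalk P) (loc_ring q).
Proof.
have good_add := good_germ_op2 (@is_sec_add R M).
have good_mul := good_germ_op2 (@is_sec_mul R M).
exists stalk_eval; split.
  move=> _ [g [G ->]]; rewrite stalk_eval_class //.
  by have [a [s [hs ->]]] := good_germ_val G; exists a, s.
split.
  move=> _ _ [g [G ->]] [h [H ->]]; rewrite !stalk_eval_class // => E.
  exact/germ_class_eq/germ_eq_of_val.
split.
  move=> _ [a [s [hs ->]]]; exists (germ_class P (frac_germ a s)).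
  by split; [exists (frac_germ a s); split=> //; exact: good_frac_germ
            | rewrite stalk_eval_class //; exact: good_frac_germ].
split; first by rewrite stalk_eval_class //; exact: good_germ_const.
split; first by rewrite stalk_eval_class //; exact: good_germ_const.
split.
  move=> _ _ [g [G ->]] [h [H ->]] /=.
  rewrite stalk_add_class // stalk_mul_class // !stalk_eval_class //.
  + exact: good_mul.
  + exact: good_add.
move=> _ [g [G ->]] /=.
by rewrite stalk_opp_class // !stalk_eval_class //; exact: good_germ_opp.
Qed.

Lemma stalk_local : local_ring (stalk P).
Proof.
apply: (ring_iso_local _ _ _ _ stalk_iso); last exact/loc_local/colon_spec_prime.
- by exists ((fun _ => True), fam_const 0); split=> //; exact: good_germ_const.
- by exists ((fun _ => True), fam_const 1); split=> //; exact: good_germ_const.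
- move=> _ _ [g [G ->]] [h [H ->]] /=; rewrite stalk_add_class //.
  by eexists; split; last reflexivity; apply: good_germ_op2 => //; exact: is_sec_add.
- move=> _ _ [g [G ->]] [h [H ->]] /=; rewrite stalk_mul_class //.
  by eexists; split; last reflexivity; apply: good_germ_op2 => //; exact: is_sec_mul.
Qed.

End Stalk.

Theorem corollary3p4 (R : comPzRingType) (M : lmodType R)
  (hX : exists P : M -> Prop, prime_submod P) :
  (forall P : spec M,
     ring_iso (stalk P) (loc_ring (colon (proj1_sig P)))) /\
  locally_ringed_space M.
Proof.
split; first exact: stalk_iso.
split; first exact: zariski_topology.
split; first exact: structure_presheaf.
by split; [exact: structure_sheaf | exact: stalk_local].
Qed.
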